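(* Let $m,N\ge1$ and $\xi=(\xi_1,\dots,\xi_m)\in\mathbb{C}^m$ with $1,\xi_1,\dots,\xi_m$ linearly independent over $\overline{\mathbb{Q}}$. Let $A\in\mathrm{GL}_m(\overline{\mathbb{Q}})$ and $\xi'=A\xi$ (viewing tuples as column vectors). Let $\varrho\ge0$. If property $\mathcal P(m,N,\xi,R)$ holds for every subspace $R\subset\mathbb{C}^\Omega$ defined over $\overline{\mathbb{Q}}$ with $\dim R=\varrho$, then $\mathcal P(m,N,\xi',R')$ holds for every subspace $R'\subset\mathbb{C}^\Omega$ defined over $\overline{\mathbb{Q}}$ with $\dim R'=\varrho$.
   Context: Let $\Omega=\{\kappa\in\mathbb{N}^m:\ N-1\le|\kappa|\le N\}$, $\Theta=\{\kappa\in\mathbb{N}^m:\ |\kappa|=N\}$ (with $|\kappa|=\kappa_1+\dots+\kappa_m$), $(E_\kappa)_{\kappa\in\Omega}$ the canonical basis of $\mathbb{C}^\Omega$, $(e_j)$ that of $\mathbb{Z}^m$. For $\zeta=(\zeta_1,\dots,\zeta_m)\in\mathbb{C}^m$ and $\kappa\in\Theta$ put $Z_\kappa^{\zeta}=E_\kappa+\sum_{j=1}^m\zeta_jE_{\kappa-e_j}$ (with $E_{\kappa-e_j}=0$ if $\kappa_j=0$) and $F_\zeta=\mathrm{Span}\{Z^\zeta_\kappa:\kappa\in\Theta\}$. For a subspace $R\subset\mathbb{C}^\Omega$, $\mathcal P(m,N,\zeta,R)$ denotes the statement: $\dim R\ge\big(2-\frac{m-1}{N+m-1}\big)\dim(F_\zeta\cap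 R)$, with equality if and only if $R=\{0\}$ or $R=\mathbb{C}^\Omega$. A subspace is defined over $\overline{\mathbb{Q}}$ if it has a basis of vectors in $\overline{\mathbb{Q}}^\Omega$. *)

(* The complex field is modelled as R[i] for an arbitrary
   realType R (complete archimedean ordered field, i.e. the reals). *)
From HB Require Import structures.
From mathcomp Require Import all_boot all_order all_algebra.
From mathcomp Require Import reals complex.
Set Implicit Arguments. Unset Strict Implicit. Unset Printing Implicit Defensive.
Import Order.TTheory GRing.Theory Num.Theory.
Local Open Scope ring_scope.

(* Raw multi-indices: kappa : 'I_m -> {0..N}.  Every kappa in Omega has
   entries <= |kappa| <= N, so this loses nothing. *)
Definition mindex (m N : nat) := {ffun 'I_m -> 'I_N.+1}.

Definition msize m N (k : mindex m N) : nat := (\sum_(i < m) (k i : nat))%N.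

Definition inOmega m N (k : mindex m N) : bool := (N.-1 <= msize k <= N)%N.

Definition Omega (m N : nat) := {k : mindex m N | inOmega k}.

(* C^Omega, vectors indexed (via enum_rank) by Omega *)
Definition CO (C : fieldType) (m N : nat) := 'rV[C]_(#|{: Omega m N}|).

Definition Evec (C : fieldType) m N (k : mindex m N) : CO C m N :=
  if insub k is Some o then delta_mx 0 (enum_rank o) else 0.

(* kappa - e_j  (only used when kappa_j > 0) *)
Definition mdec m N (k : mindex m N) (j : 'I_m) : mindex m N :=
  [ffun i => if i == j then inord (k i).-1 else k i].

Definition Zvec (C : fieldType) m N (zeta : 'cV[C]_m) (k : mindex m N) : CO C m N :=
  Evec C k + \sum_(j < m) (if (0 < k j)%N then zeta j 0 *: Evec C (mdec k j) else 0).

Definition inTheta m N (k : mindex m N) : bool := msize k == N.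

Definition Fspace (C : fieldType) m N (zeta : 'cV[C]_m) : {vspace CO C m N} :=
  (<<[seq Zvec zeta k | k <- enum (fun k : mindex m N => inTheta k)]>>)%VS.

Definition propP (C : fieldType) m N (zeta : 'cV[C]_m) (V : {vspace CO C m N}) : Prop :=
  let d := (\dim V)%:R : rat in
  let c := (2 - (m.-1)%:R / (N + m.-1)%:R) * (\dim (Fspace N zeta :&: V))%:R : rat in
  c <= d /\ ((d == c) = (V == 0%VS) || (V == fullv)).

Definition algebraic (C : fieldType) (x : C) : Prop :=
  exists p : {poly rat}, p != 0 /\ root (map_poly ratr p) x.

(* V is defined over Qbar: it has a basis (equivalently a spanning family)
   of vectors with algebraic coordinates *)
Definition defined_over_Qbar (C : fieldType) m N (V : {vspace CO C m N}) : Prop :=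
  exists s : seq (CO C m N),
    (forall v, v \in s -> forall i, algebraic (v 0 i)) /\ (<<s>>%VS = V).

Definition Qbar_indep1 (C : fieldType) m (xi : 'cV[C]_m) : Prop :=
  forall (c0 : C) (c : 'I_m -> C),
    algebraic c0 -> (forall j, algebraic (c j)) ->
    c0 + \sum_(j < m) c j * xi j 0 = 0 -> c0 = 0 /\ (forall j, c j = 0).
Arguments Fspace {C m} N zeta.

(* Index the coordinates of C^Omega by the monomials X^kappa, so that a vector v
   becomes the linear form <v, f> = sum_kappa v_kappa f_kappa on polynomials
   whose homogeneous components have degree N-1 or N.  Then F_zeta is the
   space of forms with <v, X^d> = <v, (zeta . X) X^d> for every d of degree
   N-1.  The substitution X_i |-> sum_j A_ji X_j sends zeta . X to (A zeta) . X,
   so its transpose Phi_A maps F_(A zeta) onto F_zeta; Phi_A is invertible,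
   with inverse Phi_(A^-1), and has algebraic entries when A does.  Hence
   R' |-> Phi_A(R') preserves dimension and definability over Qbar, and
   dim (F_(A xi) :&: R') = dim (F_xi :&: Phi_A(R')), so P transfers. *)

From Pilot Require Import Defs.
From HB Require Import structures.
From mathcomp Require Import all_boot all_order all_algebra zify.
From mathcomp Require Import reals complex.
From mathcomp.multinomials Require Import mpoly.
Set Implicit Arguments. Unset Strict Implicit. Unset Printing Implicit Defensive.
Import Order.TTheory GRing.Theory Num.Theory.
Local Open Scope ring_scope.

Section MultiIndexMonomials.
Variables (m N : nat).
Local Notation MI := (mindex m N).
Local Notation msize := (@Defs.msize m N).
Implicit Types (k : MI) (d : 'X_{1..m}).

Definition mnm_of k : 'X_{1..m} := [multinom (k i : nat) | i < m].
Definition mindex_of d : MI := [ffun i => inord (d i)].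
Definition mnm_bounded d := [forall i, (d i <= N)%N].

Lemma mnm_ofE k i : mnm_of k i = k i.
Proof. by rewrite mnmE. Qed.

Lemma mnm_of_inj : injective mnm_of.
Proof.
move=> k k' /mnmP eqkk'; apply/ffunP => i; apply/val_inj.
by have := eqkk' i; rewrite !mnm_ofE.
Qed.

Lemma mdeg_mnm_of k : mdeg (mnm_of k) = msize k.
Proof. by rewrite mdegE; apply: eq_bigr => i _; rewrite mnm_ofE. Qed.

Lemma mnm_ofK : cancel mnm_of mindex_of.
Proof. by move=> k; apply/ffunP => i; rewrite ffunE mnm_ofE inord_val. Qed.

Lemma mindex_ofK d : mnm_bounded d -> mnm_of (mindex_of d) = d.
Proof.
by move=> /forallP dN; apply/mnmP => i; rewrite mnm_ofE ffunE inordK // ltnS dN.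
Qed.

Lemma mnm_of_bounded k : mnm_bounded (mnm_of k).
Proof. by apply/forallP => i; rewrite mnm_ofE -ltnS ltn_ord. Qed.

Lemma mdeg_bounded d : (mdeg d <= N)%N -> mnm_bounded d.
Proof.
move=> dN; apply/forallP => i; apply: leq_trans dN.
by rewrite mdegE (bigD1 i) //= leq_addr.
Qed.

Lemma msize_mindex_of d : mnm_bounded d -> msize (mindex_of d) = mdeg d.
Proof. by move=> dN; rewrite -mdeg_mnm_of mindex_ofK. Qed.

Lemma sum_mnm_of_eq (C : nzRingType) (g : MI -> C) d :
  \sum_k g k * (mnm_of k == d)%:R = if mnm_bounded d then g (mindex_of d) else 0.
Proof.
case: ifP => dN.
  rewrite (bigD1 (mindex_of d)) //= mindex_ofK // eqxx mulr1 big1 ?addr0 // => k kd.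
  by case: eqP => [eqkd|]; [move: kd; rewrite -eqkd mnm_ofK eqxx | rewrite mulr0].
rewrite big1 // => k _; case: eqP => [eqkd|]; last by rewrite mulr0.
by move: dN; rewrite -eqkd mnm_of_bounded.
Qed.

Lemma mnm_of_mdecE k j d :
  (0 < k j)%N && (mnm_of (mdec k j) == d) = (mnm_of k == (U_(j) + d)%MM).
Proof.
have [kj0|kj_gt0] := posnP (k j).
  apply/esym/negbTE/eqP => /mnmP/(_ j).
  by rewrite mnm_ofE mnmDE mnm1E eqxx kj0.
have kj_lt : ((k j).-1 < N.+1)%N by have := ltn_ord (k j); lia.
rewrite /=; apply/eqP/eqP => /mnmP eqd; apply/mnmP => i; have := eqd i;
  rewrite !mnm_ofE mnmDE mnm1E ffunE; case: (eqVneq i j) => [->|ij];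
  rewrite ?eqxx ?(negbTE ij) ?(eq_sym j) ?(negbTE ij) //= inordK //; lia.
Qed.

Lemma mnm_of_mdec k j : (0 < k j)%N -> mnm_of k = (U_(j) + mnm_of (mdec k j))%MM.
Proof. by move=> kj; apply/eqP; rewrite -mnm_of_mdecE kj eqxx. Qed.

Lemma msize_mdec k j : (0 < k j)%N -> msize k = (msize (mdec k j)).+1.
Proof. by move=> kj; rewrite -!mdeg_mnm_of (mnm_of_mdec kj) mdegD mdeg1. Qed.

End MultiIndexMonomials.

Section Coordinates.
Variables (C : fieldType) (m N : nat).
Local Notation MI := (mindex m N).
Local Notation V := 'rV[C]_#|{: Omega m N}|.
Implicit Types (k : MI) (v : V) (f : {mpoly C[m]}).

Definition vcoord k v : C :=
  if insub k is Some o then v 0 (enum_rank o) else 0.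

Lemma vcoord0 k : vcoord k 0 = 0.
Proof. by rewrite /vcoord; case: insub => [o|]; rewrite ?mxE. Qed.

Lemma vcoordD k v w : vcoord k (v + w) = vcoord k v + vcoord k w.
Proof. by rewrite /vcoord; case: insub => [o|]; rewrite ?mxE ?addr0. Qed.

Lemma vcoordZ k a v : vcoord k (a *: v) = a * vcoord k v.
Proof. by rewrite /vcoord; case: insub => [o|]; rewrite ?mxE ?mulr0. Qed.

Lemma vcoord_sum k (I : Type) (r : seq I) (P : pred I) (F : I -> V) :
  vcoord k (\sum_(i <- r | P i) F i) = \sum_(i <- r | P i) vcoord k (F i).
Proof. exact: (big_morph _ (vcoordD k) (vcoord0 k)). Qed.

Lemma vcoord_out v k : ~~ inOmega k -> vcoord k v = 0.
Proof. by move=> kO; rewrite /vcoord insubF //; apply/negbTE. Qed.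

Lemma vcoord_val v (o : Omega m N) : vcoord (val o) v = v 0 (enum_rank o).
Proof. by rewrite /vcoord valK. Qed.

Lemma vcoord_inj v w : (forall k, vcoord k v = vcoord k w) -> v = w.
Proof.
move=> eqvw; apply/rowP => i.
by have := eqvw (val (enum_val i)); rewrite !vcoord_val enum_valK.
Qed.

Lemma vcoord_Evec k k' : vcoord k' (Evec C k) = (inOmega k && (k == k'))%:R.
Proof.
rewrite /Evec /vcoord; case: insubP => [o kO <-|kO].
  case: insubP => [o' k'O <-|k'O]; last by rewrite mxE (negbTE k'O).
  by rewrite mxE eqxx (inj_eq enum_rank_inj) (inj_eq val_inj) eq_sym (valP o').
by case: eqP => [eqkk'|]; rewrite ?andbF // eqkk' (negbTE kO).
Qed.

Lemma sum_vcoord (g : MI -> C) v :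
  \sum_(i < #|{: Omega m N}|) v 0 i * g (val (enum_val i)) = \sum_k vcoord k v * g k.
Proof.
rewrite (bigID (@inOmega m N)) /= [X in _ + X]big1 ?addr0; last first.
  by move=> k kO; rewrite vcoord_out ?mul0r.
rewrite (@reindex_omap _ _ _ _ (Omega m N) val insub) => [|k kO]; last by rewrite /= insubT.
rewrite [RHS](eq_bigl xpredT) => [|[k kO]] /=; last by rewrite kO insubT /= eqxx.
rewrite [RHS](reindex (enum_val : 'I_#|{: Omega m N}| -> _)) /=; last first.
  by exists enum_rank => x _; rewrite ?enum_valK ?enum_rankK.
by apply: eq_bigr => i _; rewrite vcoord_val enum_valK.
Qed.

Definition vpair v f : C := \sum_k vcoord k v * f@_(mnm_of k).

Lemma vpair0r v : vpair v 0 = 0.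
Proof. by rewrite /vpair big1 // => k _; rewrite mcoeff0 mulr0. Qed.

Lemma vpairDr v f g : vpair v (f + g) = vpair v f + vpair v g.
Proof. by rewrite /vpair -big_split; apply: eq_bigr => k _; rewrite mcoeffD mulrDr. Qed.

Lemma vpairZr v a f : vpair v (a *: f) = a * vpair v f.
Proof. by rewrite /vpair mulr_sumr; apply: eq_bigr => k _; rewrite mcoeffZ mulrCA. Qed.

Lemma vpair_sumr v (I : Type) (r : seq I) (P : pred I) (F : I -> {mpoly C[m]}) :
  vpair v (\sum_(i <- r | P i) F i) = \sum_(i <- r | P i) vpair v (F i).
Proof. exact: (big_morph _ (vpairDr v) (vpair0r v)). Qed.

Lemma vpairZl a v f : vpair (a *: v) f = a * vpair v f.
Proof. by rewrite /vpair mulr_sumr; apply: eq_bigr => k _; rewrite vcoordZ mulrA. Qed.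

Lemma vpair_suml (I : Type) (r : seq I) (P : pred I) (F : I -> V) f :
  vpair (\sum_(i <- r | P i) F i) f = \sum_(i <- r | P i) vpair (F i) f.
Proof.
rewrite /vpair exchange_big; apply: eq_bigr => k _.
by rewrite vcoord_sum mulr_suml.
Qed.

Lemma vpairX v d :
  vpair v 'X_[d] = if mnm_bounded N d then vcoord (mindex_of N d) v else 0.
Proof.
rewrite /vpair -(sum_mnm_of_eq (vcoord^~ v)).
by apply: eq_bigr => k _; rewrite mcoeffX eq_sym.
Qed.

Lemma vpairX_mnm_of v k : vpair v 'X_[mnm_of k] = vcoord k v.
Proof. by rewrite vpairX mnm_of_bounded mnm_ofK. Qed.

End Coordinates.

Section FspaceEquations.
Variables (C : fieldType) (m N : nat).
Hypothesis N_gt0 : (0 < N)%N.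
Local Notation MI := (mindex m N).
Local Notation msize := (@Defs.msize m N).
Local Notation V := 'rV[C]_#|{: Omega m N}|.
Implicit Types (z : 'cV[C]_m) (v : V) (k : MI).

Definition linform z : {mpoly C[m]} := \sum_(j < m) z j 0 *: 'X_j.

Definition Fspace_eqs z v :=
  forall d : 'X_{1..m}, mdeg d = N.-1 -> vpair v 'X_[d] = vpair v (linform z * 'X_[d]).

Lemma linform_homog z : linform z \is 1.-homog.
Proof. by apply: rpred_sum => j _; apply/rpredZ; rewrite dhomogX /= mdeg1. Qed.

Lemma vpair_linformX v z d :
  vpair v (linform z * 'X_[d]) = \sum_j z j 0 * vpair v 'X_[(U_(j) + d)%MM].
Proof.
rewrite /linform mulr_suml vpair_sumr; apply: eq_bigr => j _.
by rewrite -scalerAl vpairZr mpolyXD.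
Qed.

Lemma inTheta_inOmega k : inTheta k -> inOmega k.
Proof. by rewrite /inTheta /inOmega => /eqP ->; rewrite leq_pred leqnn. Qed.

Lemma vcoord_Zvec z k k' : inTheta k ->
  vcoord k' (Zvec z k) =
    (k == k')%:R + \sum_j z j 0 * (mnm_of k == (U_(j) + mnm_of k')%MM)%:R.
Proof.
move=> kTh; rewrite /Zvec vcoordD vcoord_Evec inTheta_inOmega //= vcoord_sum.
congr (_ + _); apply: eq_bigr => j _; rewrite -mnm_of_mdecE.
case: ifP => kj /=; last by rewrite vcoord0 mulr0.
rewrite vcoordZ vcoord_Evec (inj_eq (@mnm_of_inj m N)) /=.
suff -> : inOmega (mdec k j) by [].
move: (msize_mdec kj); rewrite (eqP kTh) /inOmega; move: (msize _) => s ->.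
by rewrite leqnn leqnSn.
Qed.

Lemma Zvec_eqs z k : inTheta k -> Fspace_eqs z (Zvec z k).
Proof.
move=> kTh d dN1; have kN : mdeg (mnm_of k) = N by rewrite mdeg_mnm_of; apply/eqP.
have UdN j : mdeg (U_(j) + d)%MM = N by rewrite mdegD mdeg1 dN1; lia.
have neq_mdeg (a b : 'X_{1..m}) : mdeg a != mdeg b -> (a == b) = false.
  by apply: contraNF => /eqP ->.
rewrite vpair_linformX vpairX mdeg_bounded ?dN1 ?leq_pred // vcoord_Zvec //.
rewrite -(inj_eq (@mnm_of_inj m N)) mindex_ofK ?mdeg_bounded ?dN1 ?leq_pred //.
rewrite neq_mdeg ?kN ?dN1 ?add0r; last by apply/eqP; lia.
apply: eq_bigr => j _; rewrite vpairX mdeg_bounded ?UdN // vcoord_Zvec //.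
rewrite -(inj_eq (@mnm_of_inj m N)) mindex_ofK ?mdeg_bounded ?UdN //.
rewrite big1 ?addr0 // => j' _.
by rewrite neq_mdeg ?mulr0 // kN mdegD mdeg1 UdN; apply/eqP; lia.
Qed.

Lemma mem_Fspace_eqs z v : v \in Fspace N z -> Fspace_eqs z v.
Proof.
rewrite /Fspace; set s := [seq _ | _ <- _] => vF d dN1.
rewrite (coord_span (X := in_tuple s) vF) !vpair_suml; apply: eq_bigr => i _.
rewrite !vpairZl; congr (_ * _).
have /mapP[k] : (in_tuple s)`_i \in s by apply: mem_nth; exact: ltn_ord.
by rewrite mem_enum => kTh ->; exact: Zvec_eqs.
Qed.

Lemma Fspace_eqs_homog z v h : Fspace_eqs z v -> h \is (N.-1).-homog ->
  vpair v h = vpair v (linform z * h).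
Proof.
move=> vF hN1; rewrite [h]mpolyE mulr_sumr !vpair_sumr.
apply: eq_big_seq => d dh; rewrite -scalerAr !vpairZr vF //.
exact: (dhomog_mf hN1 dh).
Qed.

Section ThetaCombination.
Variables (z : 'cV[C]_m) (c : MI -> C).
Let w : V := \sum_(k | inTheta k) c k *: Zvec z k.

Lemma vcoord_Theta_comb_top k : inTheta k -> vcoord k w = c k.
Proof.
move=> kTh; rewrite vcoord_sum (bigD1 k) //= vcoordZ vcoord_Zvec // eqxx.
have neq_top k' j : inTheta k' -> (mnm_of k' == (U_(j) + mnm_of k)%MM) = false.
  move=> /eqP k'N; apply: contraTF isT => /eqP/(congr1 mdeg).
  by rewrite mdegD mdeg1 !mdeg_mnm_of k'N (eqP kTh); lia.
rewrite big1 => [|j _]; last by rewrite neq_top ?mulr0.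
rewrite addr0 mulr1 big1 ?addr0 // => k' /andP[k'Th k'k].
rewrite vcoordZ vcoord_Zvec // (negbTE k'k) add0r big1 ?mulr0 // => j _.
by rewrite neq_top ?mulr0.
Qed.

Lemma vcoord_Theta_comb_low k : msize k = N.-1 ->
  vcoord k w = \sum_j z j 0 * c (mindex_of N (U_(j) + mnm_of k)%MM).
Proof.
move=> kN1; have UkN j : mdeg (U_(j) + mnm_of k)%MM = N.
  by rewrite mdegD mdeg1 mdeg_mnm_of kN1; lia.
pose e k' j := (mnm_of k' == (U_(j) + mnm_of k)%MM)%:R : C.
rewrite vcoord_sum (eq_bigr (fun k' => \sum_j z j 0 * (c k' * e k' j))); last first.
  move=> k' k'Th; rewrite vcoordZ vcoord_Zvec //.
  have -> : (k' == k) = false by apply: contraTF k'Th => /eqP->; rewrite /inTheta kN1; lia.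
  by rewrite add0r mulr_sumr; apply: eq_bigr => j _; rewrite mulrCA.
rewrite exchange_big /=; apply: eq_bigr => j _; rewrite -mulr_sumr big_mkcond /=.
rewrite (eq_bigr (fun k' => (if inTheta k' then c k' else 0) * e k' j)); last first.
  by move=> k' _; case: ifP; rewrite ?mul0r.
rewrite sum_mnm_of_eq mdeg_bounded ?UkN //.
by rewrite /inTheta msize_mindex_of ?mdeg_bounded ?UkN ?eqxx.
Qed.
End ThetaCombination.

Lemma Fspace_eqs_mem z v : Fspace_eqs z v -> v \in Fspace N z.
Proof.
move=> vF; have -> : v = \sum_(k | inTheta k) vcoord k v *: Zvec z k.
  apply: vcoord_inj => k; have [kO|kO] := boolP (inOmega k); last by rewrite !vcoord_out.
  have [kN|kN1] : msize k = N \/ msize k = N.-1 by move: kO => /andP[]; lia.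
    by rewrite vcoord_Theta_comb_top // /inTheta kN.
  have kd : mdeg (mnm_of k) = N.-1 by rewrite mdeg_mnm_of.
  rewrite vcoord_Theta_comb_low // -vpairX_mnm_of vF // vpair_linformX.
  apply: eq_bigr => j _; rewrite vpairX mdeg_bounded // mdegD mdeg1 kd; lia.
apply: memv_suml => k kTh; apply/memvZ/memv_span.
by apply/mapP; exists k; rewrite ?mem_enum.
Qed.

Lemma FspaceP z v : v \in Fspace N z <-> Fspace_eqs z v.
Proof. by split; [exact: mem_Fspace_eqs | exact: Fspace_eqs_mem]. Qed.

End FspaceEquations.

Section LinearSubstitution.
Variables (C : fieldType) (m : nat).
Implicit Types (z : 'cV[C]_m) (B : 'M[C]_m) (p : {mpoly C[m]}).

Definition linvars B : m.-tuple {mpoly C[m]} := [tuple linform (col i B) | i < m].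

Lemma comp_linvarsX B d :
  'X_[d] \mPo linvars B = \prod_(i < m) linform (col i B) ^+ d i.
Proof. by rewrite comp_mpolyX; apply: eq_bigr => i _; rewrite tnth_mktuple. Qed.

Lemma comp_linvars_linform B z : linform z \mPo linvars B = linform (B *m z).
Proof.
rewrite /linform raddf_sum.
rewrite (eq_bigr (fun i => \sum_j (z i 0 * B j i) *: 'X_j)) => [|i _]; last first.
  rewrite /= comp_mpolyZ comp_mpolyXU -tnth_nth tnth_mktuple /linform scaler_sumr.
  by apply: eq_bigr => j _; rewrite mxE scalerA.
rewrite exchange_big /=; apply: eq_bigr => j _; rewrite mxE -scaler_suml.
by congr (_ *: _); apply: eq_bigr => i _; rewrite mulrC.
Qed.

Lemma comp_linvarsA B B' p :
  (p \mPo linvars B') \mPo linvars B = p \mPo linvars (B *m B').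
Proof.
rewrite [p]mpolyE (raddf_sum (comp_mpoly (linvars B'))) !(raddf_sum (comp_mpoly _)).
apply: eq_bigr => d _ /=; rewrite !comp_mpolyZ.
rewrite !comp_linvarsX rmorph_prod; congr (_ *: _); apply: eq_bigr => i _.
by rewrite rmorphXn /= comp_linvars_linform !colE mulmxA.
Qed.

Lemma comp_linvars1 p : p \mPo linvars 1%:M = p.
Proof.
rewrite -[RHS]comp_mpoly_id; congr (_ \mPo _); apply: eq_from_tnth => i.
rewrite !tnth_mktuple /linform (bigD1 i) //= big1 => [|j ji].
  by rewrite addr0 !mxE eqxx scale1r.
by rewrite !mxE (negbTE ji) scale0r.
Qed.

Lemma comp_linvarsX_homog B d : 'X_[d] \mPo linvars B \is (mdeg d).-homog.
Proof.
rewrite comp_linvarsX mdegE; elim/big_rec2: _ => [|i n p _ hp]; first exact: dhomog1.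
have := dhomogMn (d i) (linform_homog (col i B)); rewrite mul1n => h.
exact: dhomogM h hp.
Qed.

End LinearSubstitution.

Section TransposedSubstitution.
Variables (C : fieldType) (m N : nat).
Local Notation MI := (mindex m N).
Local Notation V := 'rV[C]_#|{: Omega m N}|.
Implicit Types (z : 'cV[C]_m) (v : V) (B : 'M[C]_m) (f : {mpoly C[m]}).

Definition substmx B : 'M[C]_#|{: Omega m N}| :=
  \matrix_(i, j)
    ('X_[mnm_of (val (enum_val j))] \mPo linvars B)@_(mnm_of (val (enum_val i))).

Lemma vcoord_mul_substmx v B k :
  vcoord k (v *m substmx B) =
    if inOmega k then vpair v ('X_[mnm_of k] \mPo linvars B) else 0.
Proof.
case: ifP => kO; last by rewrite vcoord_out ?kO.
pose o : Omega m N := Sub k kO; have -> : k = val o by rewrite SubK.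
rewrite vcoord_val mxE /vpair -sum_vcoord; apply: eq_bigr => i _.
by rewrite mxE enum_rankK.
Qed.

Lemma homog_Omega_expansion f d0 : f \is d0.-homog -> (N.-1 <= d0 <= N)%N ->
  f = \sum_(k : MI | inOmega k) f@_(mnm_of k) *: 'X_[mnm_of k].
Proof.
move=> fd0 d0N; apply/mpolyP => d; rewrite raddf_sum /= big_mkcond /=.
rewrite (eq_bigr (fun k => (if inOmega k then f@_(mnm_of k) else 0) * (mnm_of k == d)%:R));
  last by move=> k _; case: ifP; rewrite ?mcoeffZ ?mcoeffX ?scale0r ?mcoeff0 ?mul0r.
rewrite sum_mnm_of_eq; have [df|df] := boolP (d \in msupp f); last first.
  rewrite (memN_msupp_eq0 df); case: ifP => // dN; case: ifP => // _.
  by rewrite mindex_ofK // (memN_msupp_eq0 df).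
have dd0 : mdeg d = d0 by exact: (dhomog_mf fd0 df).
have dN : mnm_bounded N d by apply: mdeg_bounded; move: d0N => /andP[]; lia.
by rewrite dN /inOmega msize_mindex_of // mindex_ofK // dd0 d0N.
Qed.

Lemma vpair_mul_substmx v B f d0 : f \is d0.-homog -> (N.-1 <= d0 <= N)%N ->
  vpair (v *m substmx B) f = vpair v (f \mPo linvars B).
Proof.
move=> fd0 d0N; rewrite [in RHS](homog_Omega_expansion fd0 d0N) raddf_sum vpair_sumr.
rewrite /vpair [LHS](bigID (@inOmega m N)) /= [X in _ + X]big1 ?addr0 => [|k kO];
  last by rewrite vcoord_out ?mul0r.
apply: eq_bigr => k kO; rewrite vcoord_mul_substmx kO /= comp_mpolyZ.
by rewrite -/(vpair _ _) vpairZr mulrC.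
Qed.

Lemma mul_substmx_Fspace v B z : (0 < N)%N ->
  v \in Fspace N (B *m z) -> v *m substmx B \in Fspace N z.
Proof.
move=> N_gt0 /(FspaceP N_gt0) vF; apply/(FspaceP N_gt0) => d dN1.
have N1N : (N.-1 <= N.-1 <= N)%N by rewrite leqnn leq_pred.
have NN : (N.-1 <= N <= N)%N by rewrite leq_pred leqnn.
have Xd : ('X_[d] : {mpoly C[m]}) \is (N.-1).-homog by rewrite dhomogX /= dN1.
have zXd : linform z * 'X_[d] \is N.-homog.
  by have := dhomogM (linform_homog z) Xd; rewrite add1n prednK.
rewrite (vpair_mul_substmx _ _ Xd N1N) (vpair_mul_substmx _ _ zXd NN).
rewrite rmorphM /= comp_linvars_linform; apply: Fspace_eqs_homog => //.
by rewrite -dN1 comp_linvarsX_homog.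
Qed.

Lemma mul_substmxK v B B' : B *m B' = 1%:M -> v *m substmx B *m substmx B' = v.
Proof.
move=> BB'1; apply: vcoord_inj => k; rewrite vcoord_mul_substmx.
case: ifP => kO; last by rewrite vcoord_out ?kO.
rewrite (vpair_mul_substmx _ _ (comp_linvarsX_homog _ _)); last by rewrite mdeg_mnm_of.
by rewrite comp_linvarsA BB'1 comp_linvars1 vpairX_mnm_of.
Qed.

End TransposedSubstitution.

Section AlgebraicCoefficients.
Variables (C : numFieldType) (m : nat).
Local Notation integral := (integralOver (ratr : {rmorphism rat -> C})).
Implicit Types (p q : {mpoly C[m]}).

Lemma algebraic_integral (x : C) : algebraic x <-> integral x.
Proof.
split=> [[p [p0 px]]|/integral_algebraic[p p0 px]]; last by exists p.
by apply/integral_algebraic; exists p.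
Qed.

Lemma integral_sum (I : Type) (r : seq I) (P : pred I) (F : I -> C) :
  (forall i, P i -> integral (F i)) -> integral (\sum_(i <- r | P i) F i).
Proof. by move=> iF; elim/big_ind: _ => //; [exact: integral0 | exact: integral_add]. Qed.

Definition mpoly_integral p := forall d, integral p@_d.

Lemma mpoly_integralX d : mpoly_integral 'X_[d].
Proof. by move=> d'; rewrite mcoeffX; exact: integral_nat. Qed.

Lemma mpoly_integralD p q : mpoly_integral p -> mpoly_integral q -> mpoly_integral (p + q).
Proof. by move=> ip iq d; rewrite mcoeffD; apply: integral_add. Qed.

Lemma mpoly_integralZ a p : integral a -> mpoly_integral p -> mpoly_integral (a *: p).
Proof. by move=> ia ip d; rewrite mcoeffZ; apply: integral_mul. Qed.

Lemma mpoly_integralM p q : mpoly_integral p -> mpoly_integral q -> mpoly_integral (p * q).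
Proof.
by move=> ip iq d; rewrite mcoeffM; apply: integral_sum => i _; apply: integral_mul.
Qed.

Lemma mpoly_integral_sum (I : Type) (r : seq I) (P : pred I) (F : I -> {mpoly C[m]}) :
  (forall i, P i -> mpoly_integral (F i)) -> mpoly_integral (\sum_(i <- r | P i) F i).
Proof.
move=> iF; elim/big_ind: _ => //; last exact: mpoly_integralD.
by move=> d; rewrite mcoeff0; exact: integral0.
Qed.

Lemma mpoly_integral_prod (I : Type) (r : seq I) (P : pred I) (F : I -> {mpoly C[m]}) :
  (forall i, P i -> mpoly_integral (F i)) -> mpoly_integral (\prod_(i <- r | P i) F i).
Proof.
move=> iF; elim/big_ind: _ => //; last exact: mpoly_integralM.
by rewrite -mpolyX0; exact: mpoly_integralX.
Qed.

Lemma mpoly_integralXn p n : mpoly_integral p -> mpoly_integral (p ^+ n).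
Proof. by move=> ip; rewrite -(subn0 n) -prodr_const_nat; apply: mpoly_integral_prod. Qed.

Lemma comp_linvarsX_integral (B : 'M[C]_m) d :
  (forall i j, integral (B i j)) -> mpoly_integral ('X_[d] \mPo linvars B).
Proof.
move=> iB; rewrite comp_linvarsX; apply: mpoly_integral_prod => i _.
apply/mpoly_integralXn/mpoly_integral_sum => j _.
by apply: mpoly_integralZ; [rewrite mxE | exact: mpoly_integralX].
Qed.

End AlgebraicCoefficients.

Lemma eq_fullv (K : fieldType) (vT : vectType K) (U : {vspace vT}) :
  (U == fullv) = (\dim U == \dim (fullv : {vspace vT})).
Proof. by apply/eqP/eqP => [->//|UF]; apply/eqP; rewrite eqEdim subvf UF leqnn. Qed.

Lemma propP_dim (C : fieldType) m N (z z' : 'cV[C]_m) (V V' : {vspace CO C m N}) :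
  \dim V = \dim V' -> \dim (Fspace N z :&: V) = \dim (Fspace N z' :&: V') ->
  propP z V -> propP z' V'.
Proof. by move=> dimV dimFV; rewrite /propP dimV dimFV -!dimv_eq0 !eq_fullv dimV. Qed.

Section Transport.
Variables (C : numFieldType) (m N : nat) (A : 'M[C]_m).
Hypothesis A_unit : A \in unitmx.
Local Notation V := (CO C m N).

Definition substf : 'End(V) := linfun (mulmxr (substmx N A)).

Lemma substfE v : substf v = v *m substmx N A.
Proof. by rewrite lfunE. Qed.

Lemma substfK : cancel substf (fun v => v *m substmx N (invmx A)).
Proof. by move=> v; rewrite substfE (mul_substmxK _ (mulmxV A_unit)). Qed.

Lemma lker_substf : lker substf == 0%VS.
Proof. exact/lker0P/(can_inj substfK). Qed.

Lemma dim_substf U : \dim (substf @: U) = \dim U.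
Proof. by apply: limg_dim_eq; rewrite (eqP lker_substf) capv0. Qed.

Lemma substf_Fspace z : (0 < N)%N -> (substf @: Fspace N (A *m z))%VS = Fspace N z.
Proof.
move=> N_gt0; apply/vspaceP => w; apply/memv_imgP/idP => [[v vF ->]|wF].
  by rewrite substfE mul_substmx_Fspace.
exists (w *m substmx N (invmx A)).
  by apply: mul_substmx_Fspace; rewrite // mulmxA mulVmx // mul1mx.
by rewrite substfE (mul_substmxK _ (mulVmx A_unit)).
Qed.

Lemma dim_Fspace_cap_substf z U : (0 < N)%N ->
  \dim (Fspace N z :&: substf @: U) = \dim (Fspace N (A *m z) :&: U).
Proof.
by move=> N_gt0; rewrite -(substf_Fspace z N_gt0) -lker0_img_cap ?lker_substf ?dim_substf.
Qed.

Lemma defined_over_Qbar_substf U : (forall i j, algebraic (A i j)) ->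
  defined_over_Qbar U -> defined_over_Qbar (substf @: U).
Proof.
move=> A_alg [s [s_alg <-]]; exists (map substf s); split; last by rewrite limg_span.
move=> w /mapP[v vs ->] j; rewrite substfE mxE.
apply/algebraic_integral/integral_sum => i _.
apply: integral_mul; first exact/algebraic_integral/s_alg.
by rewrite mxE; apply: comp_linvarsX_integral => i' j'; apply/algebraic_integral.
Qed.

End Transport.

Theorem lemma5 (R : realType) (m N : nat) (xi : 'cV[R[i]]_m)
    (A : 'M[R[i]]_m) (rho : nat) :
  (0 < m)%N -> (0 < N)%N ->
  Qbar_indep1 xi ->
  (forall i j, algebraic (A i j)) -> A \in unitmx ->
  (forall V : {vspace CO R[i] m N},
      defined_over_Qbar V -> \dim V = rho -> propP xi V) ->
  forall V' : {vspace CO R[i] m N},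
    defined_over_Qbar V' -> \dim V' = rho -> propP (A *m xi) V'.
Proof.
move=> _ N_gt0 _ A_alg A_unit P_xi V' V'_Qbar dimV'.
have dimV := dim_substf (N := N) A_unit V'.
apply: (propP_dim dimV (dim_Fspace_cap_substf A_unit xi V' N_gt0)).
by apply: P_xi; [exact: defined_over_Qbar_substf | rewrite dimV].
Qed.
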